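(* Let $\Lambda,\mu,\beta,\rho,\phi,\alpha,\omega>0$, $0<\eta_C\le 1$, $\eta_A\ge 1$, and set $\beta_1=\beta\mu/\Lambda$, $\xi_1=\alpha+\mu$, $\xi_2=\omega+\mu$, $\xi_3=\rho+\phi+\mu$. Consider the system \begin{align*} \dot S&=\Lambda-\beta_1(I+\eta_C C+\eta_A A)S-\mu S,\\ \dot I&=\beta_1(I+\eta_C C+\eta_A A)S-\xi_3 I+\alpha A+\omega C,\\ \dot C&=\phi I-\xi_2 C,\\ \dot A&=\rho I-\xi_1 A, \end{align*} on the region $\Omega=\{(S,I,C,A)\in\mathbb{R}_+^4: S+I+C+A\le \Lambda/\mu\}$, and let $\Omega_0=\{(S,I,C,A)\in\Omega: I=C=A=0\}$. Define $$\tilde R_0=\frac{\beta\,\bigl(\xi_2(\xi_1+\rho\eta_A)+\eta_C\phi\xi_1\bigr)}{\mu\,\bigl(\xi_2(\rho+\xi_1)+\phi\xi_1\bigr)}.$$ If $\tilde R_0>1$, then the endemic equilibrium $\tilde\Sigma_+=(S^*,I^*,C^*,A^* )$ of this system, given by $$S^*=\frac{\Lambda}{\mu\tilde R_0},\quad I^*=\frac{\Lambda\xi_1\xi_2(1-1/\tilde R_0)}{\mathcal D},\quad C^*=\frac{\Lambda\phi\xi_1(1-1/\tilde R_0)}{\mathcal D},\quad A^*=\frac{\Lambda\rho\xi_2(1-1/\tilde R_0)}{\mathcal D},$$ with $\mathcal D=\mu(\xi_2(\rho+\xi_1)+\phi\xi_1)$, is globally asymptotically stable in $\Omega\setminus\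Omega_0$.
   Context: This is the limiting (mass-action) form of an HIV/AIDS model with susceptible ($S$), pre-AIDS HIV-infected ($I$), HIV-infected under antiretroviral treatment ($C$) and AIDS ($A$) classes, with zero AIDS-induced death rate and total population fixed at $\Lambda/\mu$. $\tilde R_0$ is the basic reproduction number of this model; $\tilde\Sigma_+$ is its unique equilibrium with $I,C,A>0$ when $\tilde R_0>1$. *)

From Stdlib Require Import Reals.
From Coquelicot Require Import Coquelicot.
Open Scope R_scope.

Definition beta1 (Lam mu beta : R) : R := beta * mu / Lam.
Definition xi1 (mu alpha : R) : R := alpha + mu.
Definition xi2 (mu omega : R) : R := omega + mu.
Definition xi3 (mu rho phi : R) : R := rho + phi + mu.

Definition R0t (mu beta rho phi alpha omega etaC etaA : R) : R :=
  beta * (xi2 mu omega * (xi1 mu alpha + rho * etaA) + etaC * phi * xi1 mu alpha)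
  / (mu * (xi2 mu omega * (rho + xi1 mu alpha) + phi * xi1 mu alpha)).

Definition Dden (mu rho phi alpha omega : R) : R :=
  mu * (xi2 mu omega * (rho + xi1 mu alpha) + phi * xi1 mu alpha).

Definition Sstar (Lam mu beta rho phi alpha omega etaC etaA : R) : R :=
  Lam / (mu * R0t mu beta rho phi alpha omega etaC etaA).
Definition Istar (Lam mu beta rho phi alpha omega etaC etaA : R) : R :=
  Lam * xi1 mu alpha * xi2 mu omega * (1 - 1 / R0t mu beta rho phi alpha omega etaC etaA)
  / Dden mu rho phi alpha omega.
Definition Cstar (Lam mu beta rho phi alpha omega etaC etaA : R) : R :=
  Lam * phi * xi1 mu alpha * (1 - 1 / R0t mu beta rho phi alpha omega etaC etaA)
  / Dden mu rho phi alpha omega.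
Definition Astar (Lam mu beta rho phi alpha omega etaC etaA : R) : R :=
  Lam * rho * xi2 mu omega * (1 - 1 / R0t mu beta rho phi alpha omega etaC etaA)
  / Dden mu rho phi alpha omega.

Definition fS (Lam mu beta etaC etaA : R) (s i c a : R) : R :=
  Lam - beta1 Lam mu beta * (i + etaC * c + etaA * a) * s - mu * s.
Definition fI (Lam mu beta rho phi alpha omega etaC etaA : R) (s i c a : R) : R :=
  beta1 Lam mu beta * (i + etaC * c + etaA * a) * s - xi3 mu rho phi * i
  + alpha * a + omega * c.
Definition fC (mu phi omega : R) (i c : R) : R := phi * i - xi2 mu omega * c.
Definition fA (mu rho alpha : R) (i a : R) : R := rho * i - xi1 mu alpha * a.

Definition is_solution (Lam mu beta rho phi alpha omega etaC etaA : R)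
    (S I C A : R -> R) : Prop :=
  (forall t, 0 < t ->
     is_derive S t (fS Lam mu beta etaC etaA (S t) (I t) (C t) (A t)) /\
     is_derive I t (fI Lam mu beta rho phi alpha omega etaC etaA (S t) (I t) (C t) (A t)) /\
     is_derive C t (fC mu phi omega (I t) (C t)) /\
     is_derive A t (fA mu rho alpha (I t) (A t))) /\
  filterlim S (at_right 0) (locally (S 0)) /\
  filterlim I (at_right 0) (locally (I 0)) /\
  filterlim C (at_right 0) (locally (C 0)) /\
  filterlim A (at_right 0) (locally (A 0)).

Definition in_Omega (Lam mu : R) (s i c a : R) : Prop :=
  0 <= s /\ 0 <= i /\ 0 <= c /\ 0 <= a /\ s + i + c + a <= Lam / mu.
Definition in_Omega0 (Lam mu : R) (s i c a : R) : Prop :=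
  in_Omega Lam mu s i c a /\ i = 0 /\ c = 0 /\ a = 0.

Definition dist4 (s i c a s' i' c' a' : R) : R :=
  sqrt ((s - s')^2 + (i - i')^2 + (c - c')^2 + (a - a')^2).

(* Solutions starting in Omega \ Omega0 become strictly positive at once and stay
   positive, and the total population N satisfies N' = Lam - mu N, so it relaxes
   exponentially to Lam/mu and never leaves Omega.

   With g(x) = x - 1 - ln x >= 0 and x = S/S*, y = I/I*, z = C/C*, v = A/A*, the
   Volterra function V = S* g(x) + I* g(y) + w_C C* g(z) + w_A A* g(v), for suitable
   weights w_C, w_A, has along solutions
     V' = - mu S* (x-1)^2/x - beta1 S* I* (x-1)^2/x - omega C* (z-y)^2/(zy)
          - alpha A* (v-y)^2/(vy) - beta1 S* (etaC C* G(x,y,z) + etaA A* G(x,y,v)),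
   where G(x,y,z) = 1/x + xz/y + y/z - 3 >= 0 by AM-GM.  Since V is comparable to the
   squared distance to the equilibrium near it, this gives stability.  For attractivity,
   V decreases and is bounded below while the dissipation terms have bounded
   derivatives, so (Barbalat) they tend to 0: S -> S*, z - y -> 0 and v - y -> 0.
   Together with N -> Lam/mu = S* + I* + C* + A* this forces I -> I*, C -> C*, A -> A*. *)

From Pilot Require Import Defs.
From Stdlib Require Import Reals Lra Psatz Classical.
From Coquelicot Require Import Coquelicot.
Open Scope R_scope.

(** * Calculus on the real line *)

Lemma is_derive_eq (f : R -> R) (x a b : R) : is_derive f x a -> a = b -> is_derive f x b.
Proof. now intros H <-. Qed.

Lemma is_derive_Ropp (f : R -> R) (x l : R) : is_derive f x l -> is_derive (fun t => - f t) x (- l).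
Proof. exact (is_derive_opp f x l). Qed.

Lemma is_derive_Rplus (f g : R -> R) (x a b : R) :
  is_derive f x a -> is_derive g x b -> is_derive (fun t => f t + g t) x (a + b).
Proof. exact (is_derive_plus f g x a b). Qed.

Lemma is_derive_Rminus (f g : R -> R) (x a b : R) :
  is_derive f x a -> is_derive g x b -> is_derive (fun t => f t - g t) x (a - b).
Proof. exact (is_derive_minus f g x a b). Qed.

Lemma is_derive_Rmult (f g : R -> R) (x a b : R) :
  is_derive f x a -> is_derive g x b -> is_derive (fun t => f t * g t) x (a * g x + f x * b).
Proof. intros Hf Hg. exact (is_derive_mult f g x a b Hf Hg Rmult_comm). Qed.

Lemma is_derive_Rdiv_const (f : R -> R) (x l k : R) :
  is_derive f x l -> is_derive (fun t => f t / k) x (l / k).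
Proof.
  intro H. unfold Rdiv. eapply is_derive_ext; [intro; apply Rmult_comm|].
  rewrite Rmult_comm. apply is_derive_scal, H.
Qed.

Lemma continuous_of_is_derive (f : R -> R) (x l : R) :
  is_derive f x l -> filterlim f (locally x) (locally (f x)).
Proof. intro H. apply (@ex_derive_continuous R_AbsRing R_NormedModule). now exists l. Qed.

Lemma is_derive_exp_scal (k x : R) : is_derive (fun t => exp (k * t)) x (k * exp (k * x)).
Proof.
  apply (is_derive_comp exp (fun t => k * t)); [apply is_derive_exp|].
  apply is_derive_eq with (k * 1); [apply is_derive_scal, (@is_derive_id R_AbsRing) | ring].
Qed.

Lemma is_derive_integrating_factor (X Y : R -> R) (k t : R) :
  is_derive X t (Y t - k * X t) ->
  is_derive (fun t => exp (k * t) * X t) t (exp (k * t) * Y t).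
Proof.
  intro HX. eapply is_derive_eq.
  - apply (is_derive_Rmult (fun t => exp (k * t)) X); [apply is_derive_exp_scal | exact HX].
  - ring.
Qed.

Lemma MVT_closed (f df : R -> R) (a b : R) : a < b ->
  (forall x, a <= x <= b -> is_derive f x (df x)) ->
  exists c, a <= c <= b /\ f b - f a = df c * (b - a).
Proof.
  intros Hab Hd.
  destruct (MVT_gen f a b df) as [c [Hc Hfc]];
    rewrite ?Rmin_left, ?Rmax_right in * by lra.
  - intros x Hx. apply Hd. lra.
  - intros x Hx. apply continuity_pt_filterlim, (continuous_of_is_derive _ _ (df x)), Hd, Hx.
  - now exists c.
Qed.

Lemma le_of_derive_nonneg (f df : R -> R) (a b : R) : a <= b ->
  (forall x, a <= x <= b -> is_derive f x (df x)) ->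
  (forall x, a <= x <= b -> 0 <= df x) -> f a <= f b.
Proof.
  intros Hab Hd Hp. destruct (Rle_lt_or_eq_dec a b Hab) as [Hlt | <-]; [|lra].
  destruct (MVT_closed f df a b Hlt Hd) as [c [Hc E]]. specialize (Hp c Hc). nra.
Qed.

Lemma lt_of_derive_pos (f df : R -> R) (a b : R) : a < b ->
  (forall x, a <= x <= b -> is_derive f x (df x)) ->
  (forall x, a <= x <= b -> 0 < df x) -> f a < f b.
Proof.
  intros Hab Hd Hp. destruct (MVT_closed f df a b Hab Hd) as [c [Hc E]]. specialize (Hp c Hc). nra.
Qed.

Lemma lt_left_of_derive_pos (f : R -> R) (x l : R) : is_derive f x l -> 0 < l ->
  exists d, 0 < d /\ forall y, x - d < y < x -> f y < f x.
Proof.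
  intros H Hl. apply is_derive_Reals in H.
  destruct (H l Hl) as [d Hd]. exists d. split; [apply cond_pos|].
  intros y Hy. specialize (Hd (y - x) ltac:(lra)).
  rewrite Rabs_left in Hd by lra. specialize (Hd ltac:(lra)).
  replace (x + (y - x)) with y in Hd by ring.
  apply Rabs_lt_between in Hd.
  assert (Hq : 0 < (f y - f x) / (y - x)) by lra.
  assert (E : f y - f x = (f y - f x) / (y - x) * (y - x)) by (field; lra). nra.
Qed.

Section LimitArithmetic.
Context {T : Type} {F : (T -> Prop) -> Prop} {FF : Filter F}.

Lemma filterlim_Rplus (f g : T -> R) (a b : R) :
  filterlim f F (locally a) -> filterlim g F (locally b) ->
  filterlim (fun t => f t + g t) F (locally (a + b)).
Proof. intros Hf Hg. eapply filterlim_comp_2; [exact Hf | exact Hg | apply (filterlim_plus a b)]. Qed.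

Lemma filterlim_Rmult (f g : T -> R) (a b : R) :
  filterlim f F (locally a) -> filterlim g F (locally b) ->
  filterlim (fun t => f t * g t) F (locally (a * b)).
Proof. intros Hf Hg. eapply filterlim_comp_2; [exact Hf | exact Hg | apply (filterlim_mult a b)]. Qed.

Lemma filterlim_Rminus (f g : T -> R) (a b : R) :
  filterlim f F (locally a) -> filterlim g F (locally b) ->
  filterlim (fun t => f t - g t) F (locally (a - b)).
Proof.
  intros Hf Hg. replace (a - b) with (a + -1 * b) by ring.
  apply (filterlim_ext (fun t => f t + -1 * g t)); [intro; ring|].
  apply filterlim_Rplus, filterlim_Rmult; auto using filterlim_const.
Qed.

End LimitArithmetic.

Lemma ex_pos_le4 (a b c d : R) : 0 < a -> 0 < b -> 0 < c -> 0 < d ->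
  exists m, 0 < m /\ m <= a /\ m <= b /\ m <= c /\ m <= d.
Proof.
  intros Ha Hb Hc Hd. exists (Rmin (Rmin a b) (Rmin c d)).
  pose proof (Rmin_l (Rmin a b) (Rmin c d)). pose proof (Rmin_r (Rmin a b) (Rmin c d)).
  pose proof (Rmin_l a b). pose proof (Rmin_r a b). pose proof (Rmin_l c d). pose proof (Rmin_r c d).
  split; [repeat apply Rmin_glb_lt; assumption | lra].
Qed.

Lemma at_right_0_close (f : R -> R) (l : R) : filterlim f (at_right 0) (locally l) ->
  forall eps, 0 < eps -> exists d, 0 < d /\ forall t, 0 < t < d -> Rabs (f t - l) < eps.
Proof.
  intros H eps He.
  destruct (proj1 (filterlim_locally f l) H (mkposreal eps He)) as [d Hd].
  exists d. split; [apply cond_pos|]. intros t Ht. apply (Hd t); [|lra].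
  change (Rabs (t - 0) < d). rewrite Rminus_0_r, Rabs_right; lra.
Qed.

Lemma locally_close (f : R -> R) (x : R) : filterlim f (locally x) (locally (f x)) ->
  forall eps, 0 < eps -> exists d, 0 < d /\ forall y, Rabs (y - x) < d -> Rabs (f y - f x) < eps.
Proof.
  intros H eps He.
  destruct (proj1 (filterlim_locally f (f x)) H (mkposreal eps He)) as [d Hd].
  exists d. split; [apply cond_pos|]. intros y Hy. exact (Hd y Hy).
Qed.

Lemma at_right_0_pos (f : R -> R) (l : R) : filterlim f (at_right 0) (locally l) -> 0 < l ->
  exists d, 0 < d /\ forall t, 0 < t < d -> 0 < f t.
Proof.
  intros Hf Hl. destruct (at_right_0_close f l Hf l Hl) as [d [Hd Hclose]].
  exists d. split; [exact Hd|]. intros t Ht. specialize (Hclose t Ht).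
  apply Rabs_lt_between in Hclose. lra.
Qed.

Lemma locally_pos (f : R -> R) (x : R) : filterlim f (locally x) (locally (f x)) -> 0 < f x ->
  exists d, 0 < d /\ forall y, Rabs (y - x) < d -> 0 < f y.
Proof.
  intros Hf Hx. destruct (locally_close f x Hf (f x) Hx) as [d [Hd Hclose]].
  exists d. split; [exact Hd|]. intros y Hy. specialize (Hclose y Hy).
  apply Rabs_lt_between in Hclose. lra.
Qed.

Lemma nonneg_of_pos_before (f : R -> R) (x : R) : 0 < x ->
  filterlim f (locally x) (locally (f x)) -> (forall y, 0 < y < x -> 0 < f y) -> 0 <= f x.
Proof.
  intros Hx Hf Hpos. destruct (Rle_or_lt 0 (f x)) as [H|H]; [exact H|].
  destruct (locally_close f x Hf (- f x) ltac:(lra)) as [d [Hd Hclose]].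
  set (y := x - Rmin d x / 2).
  assert (Hm : 0 < Rmin d x) by (apply Rmin_glb_lt; lra).
  pose proof (Rmin_l d x). pose proof (Rmin_r d x).
  specialize (Hpos y ltac:(unfold y; lra)).
  specialize (Hclose y ltac:(unfold y; rewrite Rabs_left; lra)).
  apply Rabs_lt_between in Hclose. lra.
Qed.

Lemma right_cont_le_of_derive_nonneg (f df : R -> R) (d : R) :
  filterlim f (at_right 0) (locally (f 0)) ->
  (forall t, 0 < t < d -> is_derive f t (df t)) -> (forall t, 0 < t < d -> 0 <= df t) ->
  forall t, 0 < t < d -> f 0 <= f t.
Proof.
  intros Hf Hd Hp t Ht. destruct (Rle_or_lt (f 0) (f t)) as [H|H]; [exact H|].
  destruct (at_right_0_close f (f 0) Hf (f 0 - f t) ltac:(lra)) as [e [He Hclose]].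
  set (s := Rmin t e / 2).
  assert (Hm : 0 < Rmin t e) by (apply Rmin_glb_lt; lra).
  pose proof (Rmin_l t e). pose proof (Rmin_r t e).
  assert (Hst : f s <= f t).
  { apply (le_of_derive_nonneg f df); [unfold s; lra | |]; intros x Hx; [apply Hd | apply Hp];
      unfold s in Hx; lra. }
  specialize (Hclose s ltac:(unfold s; lra)). apply Rabs_lt_between in Hclose. lra.
Qed.

Lemma right_cont_exp_scal (X : R -> R) (k : R) :
  filterlim X (at_right 0) (locally (X 0)) ->
  filterlim (fun t => exp (k * t) * X t) (at_right 0) (locally (exp (k * 0) * X 0)).
Proof.
  intro HX. apply filterlim_Rmult; [|exact HX].
  apply (filterlim_comp _ _ _ (fun t => k * t) exp _ (locally (k * 0))).
  - apply filterlim_Rmult; [apply filterlim_const|].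
    intros P [e He]. exists e. intros y Hy _. apply He, Hy.
  - apply (continuous_of_is_derive exp _ (exp (k * 0))), is_derive_exp.
Qed.

Lemma linear_ode_pos_from_0 (X Y : R -> R) (k d : R) :
  filterlim X (at_right 0) (locally (X 0)) -> 0 <= X 0 ->
  (forall t, 0 < t < d -> is_derive X t (Y t - k * X t)) ->
  (forall t, 0 < t < d -> 0 < Y t) ->
  forall t, 0 < t < d -> 0 < X t.
Proof.
  intros HX0 HX0pos HX HY t Ht.
  set (f := fun t => exp (k * t) * X t).
  set (df := fun t => exp (k * t) * Y t).
  assert (Hf : forall s, 0 < s < d -> is_derive f s (df s))
    by (intros s Hs; apply is_derive_integrating_factor, HX, Hs).
  assert (Hdf : forall s, 0 < s < d -> 0 < df s)
    by (intros s Hs; unfold df; pose proof (exp_pos (k * s)); pose proof (HY s Hs); nra).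
  assert (H0 : f 0 <= f (t / 2)).
  { apply (right_cont_le_of_derive_nonneg f df d); [apply right_cont_exp_scal, HX0 | exact Hf | | lra].
    intros s Hs. apply Rlt_le, Hdf, Hs. }
  assert (H1 : f (t / 2) < f t)
    by (apply (lt_of_derive_pos f df); [lra | |]; intros; [apply Hf | apply Hdf]; lra).
  unfold f in H0, H1. rewrite Rmult_0_r, exp_0 in H0.
  pose proof (exp_pos (k * t)). nra.
Qed.

Lemma linear_ode_pos (X Y : R -> R) (k a b : R) : a <= b ->
  (forall t, a <= t <= b -> is_derive X t (Y t - k * X t)) ->
  (forall t, a <= t <= b -> 0 <= Y t) -> 0 < X a -> 0 < X b.
Proof.
  intros Hab HX HY Ha.
  assert (H : exp (k * a) * X a <= exp (k * b) * X b).
  { apply (le_of_derive_nonneg (fun t => exp (k * t) * X t) (fun t => exp (k * t) * Y t) a b Hab).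
    - intros t Ht. apply is_derive_integrating_factor, HX, Ht.
    - intros t Ht. pose proof (exp_pos (k * t)). pose proof (HY t Ht). nra. }
  pose proof (exp_pos (k * a)). pose proof (exp_pos (k * b)). nra.
Qed.

Lemma positive_near_0 (X dX : R -> R) (l : R) :
  filterlim X (at_right 0) (locally (X 0)) -> 0 <= X 0 ->
  (forall t, 0 < t -> is_derive X t (dX t)) -> filterlim dX (at_right 0) (locally l) ->
  (X 0 = 0 -> 0 < l) ->
  exists d, 0 < d /\ forall t, 0 < t < d -> 0 < X t.
Proof.
  intros HX0 HX0nn HX Hl Hstart.
  destruct (Rle_lt_or_eq_dec _ _ HX0nn) as [Hpos | Hzero].
  - exact (at_right_0_pos X (X 0) HX0 Hpos).
  - destruct (at_right_0_pos dX l Hl (Hstart (eq_sym Hzero))) as [d [Hd HdX]].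
    exists d. split; [exact Hd|].
    apply (linear_ode_pos_from_0 X dX 0 d HX0 HX0nn); [|exact HdX].
    intros t Ht. apply is_derive_eq with (dX t); [apply HX; lra | ring].
Qed.

Lemma right_cont_const_of_derive_0 (f : R -> R) :
  filterlim f (at_right 0) (locally (f 0)) -> (forall t, 0 < t -> is_derive f t 0) ->
  forall t, 0 < t -> f t = f 0.
Proof.
  intros Hf0 Hf t Ht.
  assert (Hle : f 0 <= f t).
  { apply (right_cont_le_of_derive_nonneg f (fun _ => 0) (t + 1) Hf0);
      [intros s Hs; apply Hf | intros | ]; lra. }
  assert (Hge : - f 0 <= - f t).
  { apply (right_cont_le_of_derive_nonneg (fun s => - f s) (fun _ => 0) (t + 1)); [| | | lra].
    - apply (filterlim_ext (fun s => 0 - f s)); [intro; ring|].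
      replace (- f 0) with (0 - f 0) by ring. apply filterlim_Rminus; [apply filterlim_const | exact Hf0].
    - intros s Hs. apply is_derive_eq with (- 0); [apply is_derive_Ropp, Hf | ]; lra.
    - intros; lra. }
  lra.
Qed.

Lemma positive_reals_induction (G : R -> Prop) :
  (exists d, 0 < d /\ forall t, 0 < t < d -> G t) ->
  (forall tau, 0 < tau -> (forall s, 0 < s < tau -> G s) -> G tau) ->
  (forall tau, 0 < tau -> G tau -> exists d, 0 < d /\ forall s, tau <= s < tau + d -> G s) ->
  forall t, 0 < t -> G t.
Proof.
  intros [d [Hd Hinit]] Hclosed Hopen t Ht.
  destruct (classic (G t)) as [HG|HnG]; [exact HG|]. exfalso.
  set (E := fun x => 0 < x <= t /\ forall s, 0 < s < x -> G s).
  assert (HEb : bound E) by (exists t; intros x [Hx _]; lra).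
  assert (HEx : E (Rmin d t)).
  { pose proof (Rmin_l d t). pose proof (Rmin_r d t).
    split; [split; [apply Rmin_glb_lt|]; lra|]. intros s Hs. apply Hinit. lra. }
  destruct (completeness E HEb (ex_intro _ _ HEx)) as [m [Hub Hlub]].
  assert (Hm_le : m <= t) by (apply Hlub; intros x [Hx _]; lra).
  assert (Hm0 : 0 < m) by (pose proof (Hub _ HEx); destruct HEx as [[? ?] _]; lra).
  assert (Hbelow : forall s, 0 < s < m -> G s).
  { intros s Hs. destruct (classic (exists x, E x /\ s < x)) as [[x [[_ Hx] Hsx]] | Hno].
    - apply Hx. lra.
    - exfalso. assert (m <= s); [|lra]. apply Hlub. intros x Hx.
      destruct (Rle_or_lt x s) as [Hxs|Hxs]; [exact Hxs|]. exfalso. apply Hno. now exists x. }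
  assert (HGm : G m) by (apply Hclosed; assumption).
  destruct (Rle_lt_or_eq_dec m t Hm_le) as [Hlt | ->]; [|contradiction].
  destruct (Hopen m Hm0 HGm) as [d2 [Hd2 Hnext]].
  assert (HE2 : E (Rmin (m + d2) t)).
  { pose proof (Rmin_l (m + d2) t). pose proof (Rmin_r (m + d2) t).
    split; [split; [apply Rmin_glb_lt|]; lra|].
    intros s Hs. destruct (Rlt_or_le s m); [apply Hbelow | apply Hnext]; lra. }
  pose proof (Hub _ HE2). pose proof (Rmin_glb_lt (m + d2) t m ltac:(lra) Hlt). lra.
Qed.

Lemma is_lim_exp_decay (k : R) : 0 < k -> is_lim (fun t => exp (- (k * t))) p_infty 0.
Proof.
  intro Hk. apply (is_lim_comp exp (fun t => - (k * t)) p_infty 0 m_infty).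
  - exact is_lim_exp_m.
  - apply is_lim_spec. intros M. exists (- M / k). intros x Hx.
    apply (Rmult_lt_compat_l k) in Hx; [|exact Hk].
    replace (k * (- M / k)) with (- M) in Hx by (field; lra). simpl. lra.
  - exists 0. intros x _. discriminate.
Qed.

Lemma nonincreasing_bounded_cauchy (V : R -> R) (t0 : R) :
  (forall t t', t0 <= t -> t <= t' -> V t' <= V t) -> (forall t, t0 <= t -> 0 <= V t) ->
  forall eta, 0 < eta -> exists T, t0 <= T /\
    forall t t', T <= t -> T <= t' -> Rabs (V t - V t') < eta.
Proof.
  intros Hmono Hlow eta Heta.
  set (E := fun x => exists t, t0 <= t /\ x = - V t).
  assert (HEb : bound E) by (exists 0; intros x [t [Ht ->]]; pose proof (Hlow t Ht); lra).
  assert (HEx : E (- V t0)) by (exists t0; split; [lra | reflexivity]).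
  destruct (completeness E HEb (ex_intro _ _ HEx)) as [M [Hub Hlub]].
  destruct (classic (exists T, t0 <= T /\ M - eta < - V T)) as [[T [HT HVT]] | Hno].
  - exists T. split; [exact HT|]. intros t t' Ht Ht'.
    assert (- V t <= M) by (apply Hub; exists t; split; [lra | reflexivity]).
    assert (- V t' <= M) by (apply Hub; exists t'; split; [lra | reflexivity]).
    pose proof (Hmono T t HT Ht). pose proof (Hmono T t' HT Ht').
    apply Rabs_lt_between. lra.
  - exfalso. assert (M <= M - eta); [|lra]. apply Hlub. intros x [t [Ht ->]].
    destruct (Rle_or_lt (- V t) (M - eta)) as [H|H]; [exact H|]. exfalso. apply Hno. now exists t.
Qed.

(* On a window of length [eps / 2K] where [w >= eps / 2], [V] would drop by
   [eps^2 / 4K], which the Cauchy property of [V] forbids for late windows. *)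
Lemma eventually_lt_of_dominated_rate (V dV w dw : R -> R) (t0 K : R) : 0 < K ->
  (forall t, t0 <= t -> is_derive V t (dV t)) ->
  (forall t, t0 <= t -> is_derive w t (dw t)) ->
  (forall t, t0 <= t -> Rabs (dw t) <= K) ->
  (forall t, t0 <= t -> w t <= - dV t) ->
  (forall eta, 0 < eta -> exists T, t0 <= T /\
     forall t t', T <= t -> T <= t' -> Rabs (V t - V t') < eta) ->
  forall eps, 0 < eps -> exists T, forall t, T <= t -> w t < eps.
Proof.
  intros HK HV Hw HdwK Hle Hcauchy eps Heps.
  set (h := eps / (2 * K)).
  assert (Hh : 0 < h) by (unfold h; apply Rdiv_lt_0_compat; lra).
  assert (HKh : K * h = eps / 2) by (unfold h; field; lra).
  destruct (Hcauchy (eps * h / 2) ltac:(nra)) as [T [HT HTc]].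
  exists T. intros t Ht. destruct (Rlt_or_le (w t) eps) as [H|H]; [exact H|]. exfalso.
  assert (Hwin : forall x, t <= x <= t + h -> eps / 2 <= w x).
  { intros x Hx. destruct (Rle_lt_or_eq_dec t x ltac:(lra)) as [Htx | <-]; [|lra].
    destruct (MVT_closed w dw t x Htx) as [c [Hc E]]; [intros y Hy; apply Hw; lra|].
    pose proof (HdwK c ltac:(lra)) as Hc'. apply Rabs_le_between in Hc'. nra. }
  destruct (MVT_closed V dV t (t + h) ltac:(lra)) as [c [Hc E]]; [intros y Hy; apply HV; lra|].
  pose proof (Hwin c Hc). pose proof (Hle c ltac:(lra)).
  specialize (HTc t (t + h) Ht ltac:(lra)). apply Rabs_lt_between in HTc.
  replace (t + h - t) with h in E by ring. nra.
Qed.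

Lemma barbalat (V dV h dh : R -> R) (t0 c Bh Bd : R) : 0 < c ->
  (forall t, t0 <= t -> is_derive V t (dV t)) -> (forall t, t0 <= t -> 0 <= V t) ->
  (forall t, t0 <= t -> is_derive h t (dh t)) ->
  (forall t, t0 <= t -> Rabs (h t) <= Bh) -> (forall t, t0 <= t -> Rabs (dh t) <= Bd) ->
  (forall t, t0 <= t -> c * h t ^ 2 <= - dV t) ->
  is_lim h p_infty 0.
Proof.
  intros Hc HV Hlow Hh HBh HBd Hrate.
  assert (Hmono : forall t t', t0 <= t -> t <= t' -> V t' <= V t).
  { intros t t' Ht Htt'.
    enough (- V t <= - V t') by lra.
    apply (le_of_derive_nonneg (fun s => - V s) (fun s => - dV s)); [exact Htt' | |].
    - intros x Hx. apply is_derive_Ropp, HV. lra.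
    - intros x Hx. pose proof (Hrate x ltac:(lra)). pose proof (pow2_ge_0 (h x)). nra. }
  pose proof (Rle_trans _ _ _ (Rabs_pos _) (HBh t0 (Rle_refl _))) as HBh0.
  pose proof (Rle_trans _ _ _ (Rabs_pos _) (HBd t0 (Rle_refl _))) as HBd0.
  assert (Hw : forall t, t0 <= t -> is_derive (fun t => c * h t ^ 2) t (c * (2 * h t * dh t))).
  { intros t Ht. apply is_derive_scal. eapply is_derive_eq; [apply is_derive_pow, Hh, Ht|]. simpl. ring. }
  assert (Hdw : forall t, t0 <= t -> Rabs (c * (2 * h t * dh t)) <= 2 * c * Bh * Bd + 1).
  { intros t Ht. rewrite !Rabs_mult, (Rabs_right c), (Rabs_right 2) by lra.
    assert (Rabs (h t) * Rabs (dh t) <= Bh * Bd)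
      by (apply Rmult_le_compat; auto using Rabs_pos).
    nra. }
  assert (HK : 0 < 2 * c * Bh * Bd + 1).
  { assert (0 <= c * Bh * Bd) by (apply Rmult_le_pos; [apply Rmult_le_pos|]; lra). lra. }
  assert (Hcauchy := nonincreasing_bounded_cauchy V t0 Hmono Hlow).
  apply is_lim_spec. intros eps.
  destruct (eventually_lt_of_dominated_rate V dV _ _ t0 (2 * c * Bh * Bd + 1) HK HV Hw Hdw Hrate Hcauchy
              (c * eps ^ 2) ltac:(apply Rmult_lt_0_compat; [lra | apply pow_lt, cond_pos])) as [T HT].
  exists T. intros t Ht. specialize (HT t (Rlt_le _ _ Ht)).
  assert (Hsq : h t ^ 2 < eps ^ 2) by (apply (Rmult_lt_reg_l c); lra).
  pose proof (cond_pos eps). rewrite Rminus_0_r. apply Rabs_def1; nra.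
Qed.

(** * The Volterra function [x - 1 - ln x] *)

Definition volterra (x : R) : R := x - 1 - ln x.
Definition volterra_at (xs x : R) : R := xs * volterra (x / xs).

Lemma ln_le_sub_1 (x : R) : 0 < x -> ln x <= x - 1.
Proof. intro Hx. pose proof (exp_ineq1_le (ln x)) as H. rewrite exp_ln in H by exact Hx. lra. Qed.

Lemma volterra_nonneg (x : R) : 0 < x -> 0 <= volterra x.
Proof. intro Hx. unfold volterra. pose proof (ln_le_sub_1 x Hx). lra. Qed.

Lemma volterra_at_nonneg (xs x : R) : 0 < xs -> 0 < x -> 0 <= volterra_at xs x.
Proof.
  intros Hxs Hx. apply Rmult_le_pos; [lra|].
  apply volterra_nonneg, Rdiv_lt_0_compat; assumption.
Qed.

Lemma three_le_sum_of_prod_1 (u v w : R) : 0 < u -> 0 < v -> 0 < w ->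
  u * v * w = 1 -> 3 <= u + v + w.
Proof.
  intros Hu Hv Hw E.
  assert (Hln : ln u + ln v + ln w = 0).
  { rewrite <- ln_mult, <- ln_mult by (try apply Rmult_lt_0_compat; assumption).
    rewrite E. apply ln_1. }
  pose proof (ln_le_sub_1 u Hu). pose proof (ln_le_sub_1 v Hv). pose proof (ln_le_sub_1 w Hw).
  lra.
Qed.

Lemma is_derive_volterra_at (X : R -> R) (xs t dx : R) : 0 < xs -> 0 < X t ->
  is_derive X t dx -> is_derive (fun t => volterra_at xs (X t)) t ((1 - xs / X t) * dx).
Proof.
  intros Hxs HX Hd. unfold volterra_at, volterra.
  pose proof (is_derive_Rdiv_const X t dx xs Hd) as Hq.
  eapply is_derive_eq.
  - apply is_derive_scal, is_derive_Rminus; [apply is_derive_Rminus; [exact Hq | apply is_derive_const]|].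
    apply (is_derive_comp ln (fun t => X t / xs)); [|exact Hq].
    apply is_derive_ln, Rdiv_lt_0_compat; assumption.
  - unfold zero, scal; simpl. unfold mult; simpl. field. split; lra.
Qed.

Lemma continuous_volterra_at (xs x : R) : 0 < xs -> 0 < x ->
  filterlim (volterra_at xs) (locally x) (locally (volterra_at xs x)).
Proof.
  intros Hxs Hx. apply (continuous_of_is_derive _ _ ((1 - xs / x) * 1)).
  apply (is_derive_volterra_at (fun t => t)); [assumption | assumption | apply (@is_derive_id R_AbsRing)].
Qed.

Lemma sqr_sub_1_lt_of_volterra_lt (x th : R) : 0 < x -> volterra x < th -> th <= 1 ->
  (x - 1) ^ 2 < 9 * th.
Proof.
  intros Hx Hg Hth. set (y := sqrt x).
  assert (Hy : 0 < y) by (apply sqrt_lt_R0; assumption).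
  assert (Hyy : y * y = x) by (apply sqrt_sqrt; lra).
  assert (Hln : ln x = ln y + ln y) by (rewrite <- Hyy; apply ln_mult; assumption).
  pose proof (ln_le_sub_1 y Hy).
  unfold volterra in Hg. rewrite Hln, <- Hyy in Hg. rewrite <- Hyy.
  (* [volterra x >= (sqrt x - 1)^2], and [(x - 1)^2 = (sqrt x - 1)^2 (sqrt x + 1)^2]. *)
  assert (Hsq : (y - 1) ^ 2 < th) by nra.
  assert (y < 2) by nra.
  assert ((y + 1) ^ 2 <= 9) by nra.
  replace ((y * y - 1) ^ 2) with ((y - 1) ^ 2 * (y + 1) ^ 2) by ring.
  pose proof (pow2_ge_0 (y - 1)). nra.
Qed.

Lemma volterra_le_sqr_sub_1 (x : R) : 1 / 2 <= x -> volterra x <= 2 * (x - 1) ^ 2.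
Proof.
  intro Hx. unfold volterra.
  pose proof (ln_le_sub_1 (/ x) ltac:(apply Rinv_0_lt_compat; lra)) as Hinv.
  rewrite ln_Rinv in Hinv by lra.
  assert (E : 2 * (x - 1) ^ 2 - (x - 1 - ln x) = (x - 1) ^ 2 * (2 * x - 1) / x + (/ x - 1 + ln x))
    by (field; lra).
  assert (0 <= (x - 1) ^ 2 * (2 * x - 1) / x).
  { apply Rdiv_le_0_compat; [apply Rmult_le_pos; [apply pow2_ge_0 | lra] | lra]. }
  lra.
Qed.

Lemma volterra_at_small_close (xs w eps : R) : 0 < xs -> 0 < w -> 0 < eps ->
  exists eta, 0 < eta /\ forall x, 0 < x -> w * volterra_at xs x < eta -> (x - xs) ^ 2 < eps.
Proof.
  intros Hxs Hw Heps.
  set (eta := Rmin (w * xs) (eps * w / (9 * xs))).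
  assert (Heta : 0 < eta).
  { apply Rmin_glb_lt; [nra|]. apply Rdiv_lt_0_compat; nra. }
  exists eta. split; [exact Heta|]. intros x Hx Hlt.
  pose proof (Rmin_l (w * xs) (eps * w / (9 * xs))) as Hm1.
  pose proof (Rmin_r (w * xs) (eps * w / (9 * xs))) as Hm2. fold eta in Hm1, Hm2.
  assert (Hth : eta / (w * xs) <= 1).
  { apply (Rmult_le_reg_r (w * xs)); [nra|]. unfold Rdiv. rewrite Rmult_assoc, Rinv_l by nra. lra. }
  assert (Hg : volterra (x / xs) < eta / (w * xs)).
  { apply (Rmult_lt_reg_r (w * xs)); [nra|]. unfold volterra_at in Hlt.
    replace (eta / (w * xs) * (w * xs)) with eta by (field; nra). lra. }
  pose proof (sqr_sub_1_lt_of_volterra_lt (x / xs) _ (Rdiv_lt_0_compat _ _ Hx Hxs) Hg Hth) as Hq.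
  replace ((x - xs) ^ 2) with (xs ^ 2 * (x / xs - 1) ^ 2) by (field; lra).
  assert (E : xs ^ 2 * (9 * (eta / (w * xs))) = 9 * xs / w * eta) by (field; nra).
  assert (Hb : 9 * xs / w * eta <= 9 * xs / w * (eps * w / (9 * xs)))
    by (apply Rmult_le_compat_l; [apply Rdiv_le_0_compat|]; lra).
  replace (9 * xs / w * (eps * w / (9 * xs))) with eps in Hb by (field; lra).
  assert (xs ^ 2 * (x / xs - 1) ^ 2 < xs ^ 2 * (9 * (eta / (w * xs))))
    by (apply Rmult_lt_compat_l; [apply pow_lt|]; assumption).
  lra.
Qed.

Lemma volterra_at_near_small (xs w eta : R) : 0 < xs -> 0 < w -> 0 < eta ->
  exists d, 0 < d /\ forall x, Rabs (x - xs) < d -> 0 < x /\ w * volterra_at xs x < eta.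
Proof.
  intros Hxs Hw Heta.
  set (q := eta * xs / (2 * w)).
  assert (Hq0 : 0 < q) by (apply Rdiv_lt_0_compat; nra).
  assert (Hsq : 0 < sqrt q) by (apply sqrt_lt_R0; exact Hq0).
  exists (Rmin (xs / 2) (sqrt q)). split; [apply Rmin_glb_lt; lra|]. intros x Hx.
  pose proof (Rmin_l (xs / 2) (sqrt q)). pose proof (Rmin_r (xs / 2) (sqrt q)).
  assert (Hxq : (x - xs) ^ 2 < q).
  { rewrite <- pow2_abs. pose proof (sqrt_sqrt q (Rlt_le _ _ Hq0)). pose proof (Rabs_pos (x - xs)). nra. }
  apply Rabs_lt_between in Hx. split; [lra|].
  assert (Hhalf : 1 / 2 <= x / xs).
  { apply (Rmult_le_reg_r xs); [exact Hxs|]. replace (x / xs * xs) with x by (field; lra). lra. }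
  pose proof (volterra_le_sqr_sub_1 _ Hhalf) as Hg. unfold volterra_at.
  assert (Hle : w * (xs * volterra (x / xs)) <= w * xs * (2 * (x / xs - 1) ^ 2))
    by (rewrite <- Rmult_assoc; apply Rmult_le_compat_l; nra).
  replace (w * xs * (2 * (x / xs - 1) ^ 2)) with (2 * w / xs * (x - xs) ^ 2) in Hle by (field; lra).
  assert (Hlt : 2 * w / xs * (x - xs) ^ 2 < 2 * w / xs * q)
    by (apply Rmult_lt_compat_l; [apply Rdiv_lt_0_compat|]; lra).
  replace (2 * w / xs * q) with eta in Hlt by (unfold q; field; lra).
  lra.
Qed.

Lemma div_le_div_l (k p q : R) : 0 <= k -> 0 < p -> p <= q -> k / q <= k / p.
Proof. intros. unfold Rdiv. apply Rmult_le_compat_l; [|apply Rinv_le_contravar]; assumption. Qed.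

Lemma Rabs_div_sub_le (x y p q X Y : R) : 0 < p -> 0 < q -> Rabs x <= X -> Rabs y <= Y ->
  Rabs (x / p - y / q) <= X / p + Y / q.
Proof.
  intros Hp Hq Hx Hy. apply Rabs_le_between in Hx. apply Rabs_le_between in Hy.
  pose proof (Rinv_0_lt_compat p Hp). pose proof (Rinv_0_lt_compat q Hq).
  unfold Rdiv. apply Rabs_le. split; nra.
Qed.

Lemma dist4_ge_components (s i c a s' i' c' a' : R) :
  Rabs (s - s') <= dist4 s i c a s' i' c' a' /\ Rabs (i - i') <= dist4 s i c a s' i' c' a' /\
  Rabs (c - c') <= dist4 s i c a s' i' c' a' /\ Rabs (a - a') <= dist4 s i c a s' i' c' a'.
Proof.
  unfold dist4.
  pose proof (pow2_ge_0 (s - s')). pose proof (pow2_ge_0 (i - i')).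
  pose proof (pow2_ge_0 (c - c')). pose proof (pow2_ge_0 (a - a')).
  repeat split; rewrite <- sqrt_Rsqr_abs; apply sqrt_le_1_alt; unfold Rsqr; simpl in *; lra.
Qed.

Lemma dist4_lt (s i c a s' i' c' a' e : R) : 0 < e ->
  (s - s') ^ 2 < e ^ 2 / 4 -> (i - i') ^ 2 < e ^ 2 / 4 ->
  (c - c') ^ 2 < e ^ 2 / 4 -> (a - a') ^ 2 < e ^ 2 / 4 ->
  dist4 s i c a s' i' c' a' < e.
Proof.
  intros He H1 H2 H3 H4. unfold dist4.
  rewrite <- (sqrt_pow2 e) by lra. apply sqrt_lt_1_alt.
  pose proof (pow2_ge_0 (s - s')). pose proof (pow2_ge_0 (i - i')).
  pose proof (pow2_ge_0 (c - c')). pose proof (pow2_ge_0 (a - a')).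
  split; lra.
Qed.

(** * Solutions of the model *)

Definition positive4 (s i c a : R) : Prop := 0 < s /\ 0 < i /\ 0 < c /\ 0 < a.

Section Model.

Variables Lam mu beta rho phi alpha omega etaC etaA : R.
Hypotheses (HLam : 0 < Lam) (Hmu : 0 < mu) (Hbeta : 0 < beta) (Hrho : 0 < rho)
  (Hphi : 0 < phi) (Halpha : 0 < alpha) (Homega : 0 < omega)
  (HetaC : 0 < etaC) (HetaA : 0 < etaA).

Local Notation b1 := (beta1 Lam mu beta).
Local Notation solution := (is_solution Lam mu beta rho phi alpha omega etaC etaA).
Local Notation fS := (fS Lam mu beta etaC etaA).
Local Notation fI := (fI Lam mu beta rho phi alpha omega etaC etaA).
Local Notation fC := (fC mu phi omega).
Local Notation fA := (fA mu rho alpha).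

Lemma beta1_pos : 0 < b1.
Proof. unfold beta1. apply Rdiv_lt_0_compat; nra. Qed.

Section Population.

Variables S I C A : R -> R.
Hypothesis Hsol : solution S I C A.

Lemma population_relaxation t : 0 < t ->
  exp (mu * t) * (S t + I t + C t + A t - Lam / mu) = S 0 + I 0 + C 0 + A 0 - Lam / mu.
Proof.
  destruct Hsol as [Hd [HS0 [HI0 [HC0 HA0]]]].
  intro Ht. set (X := fun t => S t + I t + C t + A t - Lam / mu).
  enough (E : exp (mu * t) * X t = exp (mu * 0) * X 0)
    by (rewrite Rmult_0_r, exp_0, Rmult_1_l in E; exact E).
  apply (right_cont_const_of_derive_0 (fun t => exp (mu * t) * X t)); [ | | exact Ht].
  - apply right_cont_exp_scal. unfold X.
    apply filterlim_Rminus; [repeat apply filterlim_Rplus; assumption | apply filterlim_const].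
  - intros s Hs. apply is_derive_eq with (exp (mu * s) * 0); [|ring].
    apply (is_derive_integrating_factor X (fun _ => 0)).
    destruct (Hd s Hs) as [dS [dI [dC dA]]].
    eapply is_derive_eq.
    + apply is_derive_Rminus; [|apply is_derive_const].
      apply is_derive_Rplus; [apply is_derive_Rplus; [apply is_derive_Rplus|]|]; eassumption.
    + unfold Defs.fS, Defs.fI, Defs.fC, Defs.fA, xi1, xi2, xi3, X. change (zero : R) with 0.
      field. lra.
Qed.

Lemma population_le : S 0 + I 0 + C 0 + A 0 <= Lam / mu ->
  forall t, 0 <= t -> S t + I t + C t + A t <= Lam / mu.
Proof.
  intros H0 t Ht. destruct (Rle_lt_or_eq_dec 0 t Ht) as [Hpos | <-]; [|exact H0].
  pose proof (population_relaxation t Hpos). pose proof (exp_pos (mu * t)). nra.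
Qed.

Lemma population_lim : is_lim (fun t => S t + I t + C t + A t) p_infty (Lam / mu).
Proof.
  set (c0 := S 0 + I 0 + C 0 + A 0 - Lam / mu).
  apply (is_lim_ext_loc (fun t => Lam / mu + c0 * exp (- (mu * t)))).
  - exists 0. intros t Ht. unfold c0. rewrite <- (population_relaxation t Ht), exp_Ropp.
    field. split; [apply Rgt_not_eq, exp_pos | lra].
  - pose proof (is_lim_plus' _ _ p_infty _ _ (is_lim_const (Lam / mu) p_infty)
      (is_lim_scal_l _ c0 p_infty 0 (is_lim_exp_decay mu Hmu))) as H.
    rewrite Rmult_0_r, Rplus_0_r in H. exact H.
Qed.

End Population.

Lemma right_cont_rhs (S I C A : R -> R) :
  filterlim S (at_right 0) (locally (S 0)) -> filterlim I (at_right 0) (locally (I 0)) ->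
  filterlim C (at_right 0) (locally (C 0)) -> filterlim A (at_right 0) (locally (A 0)) ->
  filterlim (fun t => fS (S t) (I t) (C t) (A t)) (at_right 0) (locally (fS (S 0) (I 0) (C 0) (A 0))) /\
  filterlim (fun t => fI (S t) (I t) (C t) (A t)) (at_right 0) (locally (fI (S 0) (I 0) (C 0) (A 0))).
Proof.
  intros HS HI HC HA. unfold Defs.fS, Defs.fI.
  split; repeat first [ apply filterlim_const | assumption | apply filterlim_Rminus
                      | apply filterlim_Rplus | apply filterlim_Rmult ].
Qed.

Section Positivity.

Variables S I C A : R -> R.
Hypotheses (Hsol : solution S I C A) (Hinit : in_Omega Lam mu (S 0) (I 0) (C 0) (A 0))
  (Hinfected : ~ in_Omega0 Lam mu (S 0) (I 0) (C 0) (A 0)).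

Lemma solution_positive_near_0 :
  exists d, 0 < d /\ forall t, 0 < t < d -> positive4 (S t) (I t) (C t) (A t).
Proof.
  destruct Hsol as [Hd [HS0 [HI0 [HC0 HA0]]]].
  destruct Hinit as [HS0nn [HI0nn [HC0nn [HA0nn _]]]].
  destruct (right_cont_rhs S I C A HS0 HI0 HC0 HA0) as [HfS HfI].
  pose proof beta1_pos.
  destruct (positive_near_0 S _ _ HS0 HS0nn (fun t Ht => proj1 (Hd t Ht)) HfS) as [dS [HdS HposS]].
  { intro E. unfold Defs.fS. rewrite E. lra. }
  destruct (positive_near_0 I _ _ HI0 HI0nn (fun t Ht => proj1 (proj2 (Hd t Ht))) HfI) as [dI [HdI HposI]].
  { (* Outside [Omega0], [I 0 = 0] forces [C 0 > 0] or [A 0 > 0], which feeds new infections. *)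
    intro E. unfold Defs.fI. rewrite E.
    assert (HCA : 0 < C 0 \/ 0 < A 0).
    { destruct (Rle_lt_or_eq_dec _ _ HC0nn) as [HC | HC]; [now left|].
      destruct (Rle_lt_or_eq_dec _ _ HA0nn) as [HA | HA]; [now right|].
      exfalso. apply Hinfected. split; [exact Hinit|]. split; [exact E|]. split; symmetry; assumption. }
    assert (0 <= b1 * (0 + etaC * C 0 + etaA * A 0) * S 0)
      by (apply Rmult_le_pos; [apply Rmult_le_pos|]; nra).
    destruct HCA; nra. }
  exists (Rmin dS dI). split; [apply Rmin_glb_lt; assumption|].
  pose proof (Rmin_l dS dI). pose proof (Rmin_r dS dI).
  assert (HI : forall t, 0 < t < Rmin dS dI -> 0 < I t) by (intros; apply HposI; lra).
  intros t Ht. repeat split; [apply HposS; lra | apply HI, Ht | |].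
  - apply (linear_ode_pos_from_0 C (fun t => phi * I t) (xi2 mu omega) (Rmin dS dI) HC0 HC0nn);
      [ | | exact Ht]; intros s Hs; [apply (Hd s ltac:(lra)) | pose proof (HI s Hs); nra].
  - apply (linear_ode_pos_from_0 A (fun t => rho * I t) (xi1 mu alpha) (Rmin dS dI) HA0 HA0nn);
      [ | | exact Ht]; intros s Hs; [apply (Hd s ltac:(lra)) | pose proof (HI s Hs); nra].
Qed.

Lemma solution_positive_at_end tau : 0 < tau ->
  (forall s, 0 < s < tau -> positive4 (S s) (I s) (C s) (A s)) ->
  positive4 (S tau) (I tau) (C tau) (A tau).
Proof.
  intros Htau Hbefore.
  destruct (proj1 Hsol tau Htau) as [dS [dI [dC dA]]].
  assert (Hnn : forall t, tau / 2 <= t <= tau -> 0 <= S t /\ 0 <= I t /\ 0 <= C t /\ 0 <= A t).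
  { intros t Ht. destruct (Rle_lt_or_eq_dec t tau ltac:(lra)) as [Hlt | ->].
    - destruct (Hbefore t ltac:(lra)) as [? [? [? ?]]]. lra.
    - repeat split; apply (nonneg_of_pos_before _ tau Htau);
        try (eapply continuous_of_is_derive; eassumption);
        intros s Hs; apply Hbefore, Hs. }
  assert (Hode : forall (X Y : R -> R) k, (forall t, 0 < t -> is_derive X t (Y t - k * X t)) ->
            (forall t, tau / 2 <= t <= tau -> 0 <= Y t) -> 0 < X (tau / 2) -> 0 < X tau).
  { intros X Y k HX HY HX0. apply (linear_ode_pos X Y k (tau / 2) tau); [lra | | exact HY | exact HX0].
    intros t Ht. apply HX. lra. }
  pose proof beta1_pos.
  destruct (Hbefore (tau / 2) ltac:(lra)) as [HS2 [HI2 [HC2 HA2]]].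
  repeat split.
  - (* If [S tau = 0] then [S' tau = Lam > 0], so [S < 0] just before [tau]. *)
    destruct (Rle_lt_or_eq_dec _ _ (proj1 (Hnn tau ltac:(lra)))) as [Hpos | Hzero]; [exact Hpos|].
    destruct (lt_left_of_derive_pos S tau _ dS) as [d [Hd Hleft]].
    { unfold Defs.fS. rewrite <- Hzero. lra. }
    set (y := tau - Rmin d tau / 2).
    assert (0 < Rmin d tau) by (apply Rmin_glb_lt; lra).
    pose proof (Rmin_l d tau). pose proof (Rmin_r d tau).
    specialize (Hleft y ltac:(unfold y; lra)). destruct (Hbefore y ltac:(unfold y; lra)). lra.
  - apply (Hode I (fun t => b1 * (I t + etaC * C t + etaA * A t) * S t + alpha * A t + omega * C t)
      (xi3 mu rho phi)); [| | exact HI2].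
    + intros t Ht. destruct (proj1 Hsol t Ht) as [_ [HdI _]].
      eapply is_derive_eq; [exact HdI | unfold Defs.fI; ring].
    + intros t Ht. destruct (Hnn t Ht) as [? [? [? ?]]].
      assert (0 <= b1 * (I t + etaC * C t + etaA * A t) * S t)
        by (apply Rmult_le_pos; [apply Rmult_le_pos|]; nra).
      nra.
  - apply (Hode C (fun t => phi * I t) (xi2 mu omega)); [ | | exact HC2].
    { intros t Ht. apply (proj1 Hsol t Ht). }
    intros t Ht. destruct (Hnn t Ht) as [? [? ?]]. nra.
  - apply (Hode A (fun t => rho * I t) (xi1 mu alpha)); [ | | exact HA2].
    { intros t Ht. apply (proj1 Hsol t Ht). }
    intros t Ht. destruct (Hnn t Ht) as [? [? ?]]. nra.
Qed.

Lemma solution_positive_after tau : 0 < tau -> positive4 (S tau) (I tau) (C tau) (A tau) ->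
  exists d, 0 < d /\ forall s, tau <= s < tau + d -> positive4 (S s) (I s) (C s) (A s).
Proof.
  intros Htau [HS [HI [HC HA]]].
  destruct (proj1 Hsol tau Htau) as [dS [dI [dC dA]]].
  destruct (locally_pos S tau (continuous_of_is_derive _ _ _ dS) HS) as [d1 [Hd1 H1]].
  destruct (locally_pos I tau (continuous_of_is_derive _ _ _ dI) HI) as [d2 [Hd2 H2]].
  destruct (locally_pos C tau (continuous_of_is_derive _ _ _ dC) HC) as [d3 [Hd3 H3]].
  destruct (locally_pos A tau (continuous_of_is_derive _ _ _ dA) HA) as [d4 [Hd4 H4]].
  destruct (ex_pos_le4 d1 d2 d3 d4 Hd1 Hd2 Hd3 Hd4) as [d [Hd [Hd1' [Hd2' [Hd3' Hd4']]]]].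
  exists d. split; [exact Hd|]. intros s Hs.
  repeat split; [apply H1 | apply H2 | apply H3 | apply H4]; rewrite Rabs_right; lra.
Qed.

Theorem solution_positive t : 0 < t -> positive4 (S t) (I t) (C t) (A t).
Proof.
  apply (positive_reals_induction (fun t => positive4 (S t) (I t) (C t) (A t))).
  - exact solution_positive_near_0.
  - exact solution_positive_at_end.
  - exact solution_positive_after.
Qed.

End Positivity.

Let M := Lam / mu.
Let K := Lam + b1 * (1 + etaC + etaA) * M ^ 2 + (rho + phi + alpha + omega + 3 * mu) * M.

Lemma rhs_bounded s i c a : 0 <= s <= M -> 0 <= i <= M -> 0 <= c <= M -> 0 <= a <= M ->
  Rabs (fS s i c a) <= K /\ Rabs (fI s i c a) <= K /\ Rabs (fC i c) <= K /\ Rabs (fA i a) <= K.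
Proof.
  intros Hs Hi Hc Ha. pose proof beta1_pos.
  assert (HM : 0 < M) by (apply Rdiv_lt_0_compat; assumption).
  assert (HF : 0 <= i + etaC * c + etaA * a <= (1 + etaC + etaA) * M) by nra.
  assert (HFs : 0 <= (i + etaC * c + etaA * a) * s <= (1 + etaC + etaA) * M * M)
    by (split; [apply Rmult_le_pos | apply Rmult_le_compat]; lra).
  assert (Hinc : 0 <= b1 * ((i + etaC * c + etaA * a) * s) <= b1 * ((1 + etaC + etaA) * M * M))
    by (split; [apply Rmult_le_pos | apply Rmult_le_compat_l]; lra).
  assert (Hlin : forall k x, 0 < k -> 0 <= x <= M -> 0 <= k * x <= k * M) by (intros; split; nra).
  pose proof (Hlin mu s Hmu Hs). pose proof (Hlin mu i Hmu Hi). pose proof (Hlin mu c Hmu Hc).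
  pose proof (Hlin mu a Hmu Ha). pose proof (Hlin rho i Hrho Hi). pose proof (Hlin phi i Hphi Hi).
  pose proof (Hlin alpha a Halpha Ha). pose proof (Hlin omega c Homega Hc).
  unfold K, Defs.fS, Defs.fI, Defs.fC, Defs.fA, xi1, xi2, xi3.
  repeat split; apply Rabs_le; split; lra.
Qed.

(** * Global stability of a positive equilibrium *)

Section Equilibrium.

Variables Ss Is Cs As : R.
Hypotheses (HSs : 0 < Ss) (HIs : 0 < Is) (HCs : 0 < Cs) (HAs : 0 < As).
Hypotheses (steady_S : fS Ss Is Cs As = 0) (steady_I : fI Ss Is Cs As = 0)
  (steady_C : fC Is Cs = 0) (steady_A : fA Is As = 0).

Lemma infection_balance : b1 * (Is + etaC * Cs + etaA * As) * Ss = mu * (Is + Cs + As).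
Proof.
  unfold Defs.fI, Defs.fC, Defs.fA, xi1, xi2, xi3 in *. lra.
Qed.

Lemma equilibrium_total : Ss + Is + Cs + As = Lam / mu.
Proof.
  pose proof infection_balance. unfold Defs.fS in steady_S.
  replace Lam with (mu * (Ss + Is + Cs + As)) by lra. field. lra.
Qed.

(* The weights make the terms of [lyapunov_rate] that are linear in [c] and in [a] cancel. *)
Definition weight_C : R := (b1 * Ss * etaC * Cs + omega * Cs) / (phi * Is).
Definition weight_A : R := (b1 * Ss * etaA * As + alpha * As) / (rho * Is).

Lemma weight_C_pos : 0 < weight_C.
Proof.
  pose proof beta1_pos. unfold weight_C.
  apply Rdiv_lt_0_compat; [|nra].
  assert (0 < b1 * Ss * etaC * Cs)
    by (apply Rmult_lt_0_compat; [apply Rmult_lt_0_compat; [apply Rmult_lt_0_compat|]|]; assumption).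
  nra.
Qed.

Lemma weight_A_pos : 0 < weight_A.
Proof.
  pose proof beta1_pos. unfold weight_A.
  apply Rdiv_lt_0_compat; [|nra].
  assert (0 < b1 * Ss * etaA * As)
    by (apply Rmult_lt_0_compat; [apply Rmult_lt_0_compat; [apply Rmult_lt_0_compat|]|]; assumption).
  nra.
Qed.

Definition lyapunov (s i c a : R) : R :=
  volterra_at Ss s + volterra_at Is i + weight_C * volterra_at Cs c + weight_A * volterra_at As a.

Definition lyapunov_rate (s i c a : R) : R :=
  (1 - Ss / s) * fS s i c a + (1 - Is / i) * fI s i c a
  + weight_C * ((1 - Cs / c) * fC i c) + weight_A * ((1 - As / a) * fA i a).

Lemma lyapunov_nonneg s i c a : positive4 s i c a -> 0 <= lyapunov s i c a.
Proof.
  intros [Hs [Hi [Hc Ha]]]. unfold lyapunov.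
  pose proof (volterra_at_nonneg Ss s HSs Hs). pose proof (volterra_at_nonneg Is i HIs Hi).
  pose proof (volterra_at_nonneg Cs c HCs Hc). pose proof (volterra_at_nonneg As a HAs Ha).
  pose proof weight_C_pos. pose proof weight_A_pos. nra.
Qed.

Lemma lyapunov_rate_eq s i c a : positive4 s i c a ->
  lyapunov_rate s i c a =
  - (mu * (s - Ss) ^ 2 / s + b1 * Is * (s - Ss) ^ 2 / s
     + b1 * Ss * etaC * Cs * (Ss / s + s / Ss * (c / Cs) / (i / Is) + i / Is / (c / Cs) - 3)
     + b1 * Ss * etaA * As * (Ss / s + s / Ss * (a / As) / (i / Is) + i / Is / (a / As) - 3)
     + omega * Cs * (c / Cs - i / Is) ^ 2 * (Cs * Is) / (c * i)
     + alpha * As * (a / As - i / Is) ^ 2 * (As * Is) / (a * i)).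
Proof.
  intros [Hs [Hi [Hc Ha]]].
  pose proof infection_balance as Hbal.
  assert (HF : 0 < Is + etaC * Cs + etaA * As) by nra.
  assert (HLam_eq : Lam = b1 * (Is + etaC * Cs + etaA * As) * Ss + mu * Ss)
    by (unfold Defs.fS in steady_S; lra).
  assert (Hphi_eq : phi = (omega + mu) * Cs / Is)
    by (unfold Defs.fC, xi2 in steady_C; field_simplify_eq; lra).
  assert (Hrho_eq : rho = (alpha + mu) * As / Is)
    by (unfold Defs.fA, xi1 in steady_A; field_simplify_eq; lra).
  assert (Hb1_eq : b1 = mu * (Is + Cs + As) / ((Is + etaC * Cs + etaA * As) * Ss))
    by (field_simplify_eq; [lra | split; lra]).
  unfold lyapunov_rate, weight_C, weight_A, Defs.fS, Defs.fI, Defs.fC, Defs.fA, xi1, xi2, xi3.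
  set (b := beta1 Lam mu beta) in *. clearbody b.
  rewrite HLam_eq, Hphi_eq, Hrho_eq, Hb1_eq.
  field. repeat split; lra.
Qed.

Lemma lyapunov_rate_le s i c a : positive4 s i c a ->
  lyapunov_rate s i c a <= 0 /\
  lyapunov_rate s i c a <= - (mu * (s - Ss) ^ 2 / s) /\
  lyapunov_rate s i c a <= - (omega * Cs * (c / Cs - i / Is) ^ 2 * (Cs * Is) / (c * i)) /\
  lyapunov_rate s i c a <= - (alpha * As * (a / As - i / Is) ^ 2 * (As * Is) / (a * i)).
Proof.
  intros Hpos. rewrite (lyapunov_rate_eq s i c a Hpos).
  destruct Hpos as [Hs [Hi [Hc Ha]]]. pose proof beta1_pos.
  assert (Hamgm : forall z, 0 < z -> 0 <= Ss / s + s / Ss * z / (i / Is) + i / Is / z - 3).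
  { intros z Hz. enough (3 <= Ss / s + s / Ss * z / (i / Is) + i / Is / z) by lra.
    apply three_le_sum_of_prod_1.
    - apply Rdiv_lt_0_compat; assumption.
    - apply Rdiv_lt_0_compat; [apply Rmult_lt_0_compat|]; [|assumption|]; apply Rdiv_lt_0_compat; assumption.
    - apply Rdiv_lt_0_compat; [apply Rdiv_lt_0_compat|]; assumption.
    - field. repeat split; lra. }
  assert (Hsq : forall k x y, 0 <= k -> 0 < y -> 0 <= k * x ^ 2 / y)
    by (intros; apply Rdiv_le_0_compat; [apply Rmult_le_pos; [|apply pow2_ge_0]|]; assumption).
  assert (0 <= mu * (s - Ss) ^ 2 / s) by (apply Hsq; lra).
  assert (0 <= b1 * Is * (s - Ss) ^ 2 / s) by (apply Hsq; nra).
  assert (0 <= omega * Cs * (c / Cs - i / Is) ^ 2 * (Cs * Is) / (c * i)).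
  { apply Rdiv_le_0_compat; [|nra].
    apply Rmult_le_pos; [apply Rmult_le_pos; [nra | apply pow2_ge_0] | nra]. }
  assert (0 <= alpha * As * (a / As - i / Is) ^ 2 * (As * Is) / (a * i)).
  { apply Rdiv_le_0_compat; [|nra].
    apply Rmult_le_pos; [apply Rmult_le_pos; [nra | apply pow2_ge_0] | nra]. }
  assert (0 <= b1 * Ss * etaC * Cs * (Ss / s + s / Ss * (c / Cs) / (i / Is) + i / Is / (c / Cs) - 3))
    by (apply Rmult_le_pos; [apply Rmult_le_pos; [apply Rmult_le_pos; [apply Rmult_le_pos|]|]; lra
                            | apply Hamgm, Rdiv_lt_0_compat; assumption]).
  assert (0 <= b1 * Ss * etaA * As * (Ss / s + s / Ss * (a / As) / (i / Is) + i / Is / (a / As) - 3))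
    by (apply Rmult_le_pos; [apply Rmult_le_pos; [apply Rmult_le_pos; [apply Rmult_le_pos|]|]; lra
                            | apply Hamgm, Rdiv_lt_0_compat; assumption]).
  repeat split; lra.
Qed.

Section Dissipation.

Variables S I C A : R -> R.
Hypotheses (Hsol : solution S I C A)
  (Hpos : forall t, 0 < t -> positive4 (S t) (I t) (C t) (A t))
  (Hbound : forall t, 0 < t -> S t + I t + C t + A t <= M).

Lemma solution_in_box t : 0 < t -> 0 < S t <= M /\ 0 < I t <= M /\ 0 < C t <= M /\ 0 < A t <= M.
Proof. intro Ht. pose proof (Hbound t Ht). destruct (Hpos t Ht) as [? [? [? ?]]]. lra. Qed.

Lemma solution_rhs_bounded t : 0 < t ->
  Rabs (fS (S t) (I t) (C t) (A t)) <= K /\ Rabs (fI (S t) (I t) (C t) (A t)) <= K /\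
  Rabs (fC (I t) (C t)) <= K /\ Rabs (fA (I t) (A t)) <= K.
Proof. intro Ht. destruct (solution_in_box t Ht) as [? [? [? ?]]]. apply rhs_bounded; lra. Qed.

Lemma lyapunov_is_derive t : 0 < t ->
  is_derive (fun t => lyapunov (S t) (I t) (C t) (A t)) t (lyapunov_rate (S t) (I t) (C t) (A t)).
Proof.
  intro Ht. destruct (Hpos t Ht) as [HS [HI [HC HA]]].
  destruct (proj1 Hsol t Ht) as [dS [dI [dC dA]]].
  unfold lyapunov, lyapunov_rate.
  repeat apply is_derive_Rplus; try apply is_derive_scal; apply is_derive_volterra_at; assumption.
Qed.

Lemma lyapunov_le_initial : positive4 (S 0) (I 0) (C 0) (A 0) ->
  forall t, 0 < t -> lyapunov (S t) (I t) (C t) (A t) <= lyapunov (S 0) (I 0) (C 0) (A 0).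
Proof.
  intros [HS0 [HI0 [HC0 HA0]]] t Ht.
  destruct Hsol as [_ [HS [HI [HC HA]]]].
  set (V := fun t => lyapunov (S t) (I t) (C t) (A t)).
  assert (HV : filterlim V (at_right 0) (locally (V 0))).
  { assert (Hcomp : forall X xs, 0 < xs -> 0 < X 0 -> filterlim X (at_right 0) (locally (X 0)) ->
              filterlim (fun t => volterra_at xs (X t)) (at_right 0) (locally (volterra_at xs (X 0))))
      by (intros X xs Hxs HX0 HX; eapply filterlim_comp;
          [exact HX | apply continuous_volterra_at; assumption]).
    unfold V, lyapunov.
    repeat first [ apply Hcomp; assumption | apply filterlim_Rplus | apply filterlim_Rmult
                 | apply filterlim_const ]. }
  enough (- V 0 <= - V t) by (unfold V in *; lra).
  apply (right_cont_le_of_derive_nonneg (fun t => - V t)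
           (fun t => - lyapunov_rate (S t) (I t) (C t) (A t)) (t + 1)); [ | | | lra].
  - apply (filterlim_ext (fun t => 0 - V t)); [intro; ring|].
    replace (- V 0) with (0 - V 0) by ring. apply filterlim_Rminus; [apply filterlim_const | exact HV].
  - intros s Hs. apply is_derive_Ropp, lyapunov_is_derive. lra.
  - intros s Hs. pose proof (lyapunov_rate_le _ _ _ _ (Hpos s ltac:(lra))). lra.
Qed.

Lemma vanishing_of_dissipation (h dh : R -> R) (c Bh Bd : R) : 0 < c ->
  (forall t, 0 < t -> is_derive h t (dh t)) ->
  (forall t, 0 < t -> Rabs (h t) <= Bh) -> (forall t, 0 < t -> Rabs (dh t) <= Bd) ->
  (forall t, 0 < t -> c * h t ^ 2 <= - lyapunov_rate (S t) (I t) (C t) (A t)) ->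
  is_lim h p_infty 0.
Proof.
  intros Hc Hh HBh HBd Hrate.
  apply (barbalat (fun t => lyapunov (S t) (I t) (C t) (A t))
                  (fun t => lyapunov_rate (S t) (I t) (C t) (A t)) h dh 1 c Bh Bd Hc);
    intros t Ht; [apply lyapunov_is_derive | apply lyapunov_nonneg, Hpos | apply Hh
                 | apply HBh | apply HBd | apply Hrate]; lra.
Qed.

Lemma S_lim : is_lim S p_infty Ss.
Proof.
  assert (HM : 0 < M) by (apply Rdiv_lt_0_compat; assumption).
  assert (Hgap : is_lim (fun t => S t - Ss) p_infty 0).
  { apply (vanishing_of_dissipation _ (fun t => fS (S t) (I t) (C t) (A t) - 0) (mu / M) (M + Ss) K).
    - apply Rdiv_lt_0_compat; assumption.
    - intros t Ht. apply is_derive_Rminus; [apply (proj1 Hsol t Ht) | exact (is_derive_const Ss t)].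
    - intros t Ht. destruct (solution_in_box t Ht) as [? _]. apply Rabs_le. lra.
    - intros t Ht. rewrite Rminus_0_r. apply (solution_rhs_bounded t Ht).
    - intros t Ht. destruct (solution_in_box t Ht) as [HSt _].
      destruct (lyapunov_rate_le _ _ _ _ (Hpos t Ht)) as [_ [Hle _]].
      replace (mu / M * (S t - Ss) ^ 2) with (mu * (S t - Ss) ^ 2 / M) by (field; lra).
      pose proof (div_le_div_l (mu * (S t - Ss) ^ 2) (S t) M
                    ltac:(apply Rmult_le_pos; [lra | apply pow2_ge_0]) (proj1 HSt) (proj2 HSt)).
      lra. }
  apply (is_lim_ext (fun t => (S t - Ss) + Ss)); [intro; ring|].
  replace (Finite Ss) with (Finite (0 + Ss)) by (f_equal; ring).
  apply is_lim_plus'; [exact Hgap | apply is_lim_const].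
Qed.

Lemma ratio_gap_lim (X dX : R -> R) (Xs k : R) : 0 < Xs -> 0 < k ->
  (forall t, 0 < t -> is_derive X t (dX t)) -> (forall t, 0 < t -> 0 < X t <= M) ->
  (forall t, 0 < t -> Rabs (dX t) <= K) ->
  (forall t, 0 < t -> lyapunov_rate (S t) (I t) (C t) (A t) <=
     - (k * Xs * (X t / Xs - I t / Is) ^ 2 * (Xs * Is) / (X t * I t))) ->
  is_lim (fun t => X t / Xs - I t / Is) p_infty 0.
Proof.
  intros HXs Hk HdX HXM HdXK Hrate.
  assert (HM : 0 < M) by (apply Rdiv_lt_0_compat; assumption).
  apply (vanishing_of_dissipation _ (fun t => dX t / Xs - fI (S t) (I t) (C t) (A t) / Is)
           (k * Xs * (Xs * Is) / (M * M)) (M / Xs + M / Is) (K / Xs + K / Is)).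
  - apply Rdiv_lt_0_compat; [repeat apply Rmult_lt_0_compat|]; nra.
  - intros t Ht.
    apply is_derive_Rminus; apply is_derive_Rdiv_const; [apply HdX, Ht | apply (proj1 Hsol t Ht)].
  - intros t Ht. destruct (solution_in_box t Ht) as [_ [HIt _]]. pose proof (HXM t Ht).
    apply Rabs_div_sub_le; try assumption; apply Rabs_le; lra.
  - intros t Ht.
    apply Rabs_div_sub_le; [assumption | assumption | apply HdXK, Ht | apply (solution_rhs_bounded t Ht)].
  - intros t Ht. destruct (solution_in_box t Ht) as [_ [HIt _]].
    pose proof (HXM t Ht). pose proof (Hrate t Ht).
    set (u := X t / Xs - I t / Is) in *.
    replace (k * Xs * (Xs * Is) / (M * M) * u ^ 2) with (k * Xs * u ^ 2 * (Xs * Is) / (M * M))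
      by (field; lra).
    assert (X t * I t <= M * M) by (apply Rmult_le_compat; lra).
    pose proof (div_le_div_l (k * Xs * u ^ 2 * (Xs * Is)) (X t * I t) (M * M)
                  ltac:(pose proof (pow2_ge_0 u); apply Rmult_le_pos; [apply Rmult_le_pos|]; nra)
                  ltac:(nra) ltac:(assumption)).
    lra.
Qed.

Lemma C_I_gap_lim : is_lim (fun t => C t / Cs - I t / Is) p_infty 0.
Proof.
  apply (ratio_gap_lim C (fun t => fC (I t) (C t)) Cs omega HCs Homega).
  - intros t Ht. apply (proj1 Hsol t Ht).
  - intros t Ht. apply (solution_in_box t Ht).
  - intros t Ht. apply (solution_rhs_bounded t Ht).
  - intros t Ht. apply (lyapunov_rate_le _ _ _ _ (Hpos t Ht)).
Qed.

Lemma A_I_gap_lim : is_lim (fun t => A t / As - I t / Is) p_infty 0.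
Proof.
  apply (ratio_gap_lim A (fun t => fA (I t) (A t)) As alpha HAs Halpha).
  - intros t Ht. apply (proj1 Hsol t Ht).
  - intros t Ht. apply (solution_in_box t Ht).
  - intros t Ht. apply (solution_rhs_bounded t Ht).
  - intros t Ht. apply (lyapunov_rate_le _ _ _ _ (Hpos t Ht)).
Qed.

End Dissipation.

Lemma lyapunov_small_close eps : 0 < eps -> exists eta, 0 < eta /\
  forall s i c a, positive4 s i c a -> lyapunov s i c a < eta -> dist4 s i c a Ss Is Cs As < eps.
Proof.
  intros Heps. assert (He : 0 < eps ^ 2 / 4) by (pose proof (pow_lt eps 2 Heps); lra).
  pose proof weight_C_pos. pose proof weight_A_pos.
  destruct (volterra_at_small_close Ss 1 _ HSs Rlt_0_1 He) as [e1 [He1 H1]].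
  destruct (volterra_at_small_close Is 1 _ HIs Rlt_0_1 He) as [e2 [He2 H2]].
  destruct (volterra_at_small_close Cs weight_C _ HCs weight_C_pos He) as [e3 [He3 H3]].
  destruct (volterra_at_small_close As weight_A _ HAs weight_A_pos He) as [e4 [He4 H4]].
  destruct (ex_pos_le4 e1 e2 e3 e4 He1 He2 He3 He4) as [eta [Heta [He1' [He2' [He3' He4']]]]].
  exists eta. split; [exact Heta|].
  intros s i c a Hpos HV. destruct Hpos as [Hs [Hi [Hc Ha]]].
  pose proof (volterra_at_nonneg Ss s HSs Hs). pose proof (volterra_at_nonneg Is i HIs Hi).
  pose proof (volterra_at_nonneg Cs c HCs Hc). pose proof (volterra_at_nonneg As a HAs Ha).
  assert (0 <= weight_C * volterra_at Cs c) by (apply Rmult_le_pos; lra).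
  assert (0 <= weight_A * volterra_at As a) by (apply Rmult_le_pos; lra).
  unfold lyapunov in HV.
  apply dist4_lt; [exact Heps | apply H1 | apply H2 | apply H3 | apply H4]; try assumption; lra.
Qed.

Lemma lyapunov_near_small eta : 0 < eta -> exists d, 0 < d /\
  forall s i c a, dist4 s i c a Ss Is Cs As < d -> positive4 s i c a /\ lyapunov s i c a < eta.
Proof.
  intros Heta. assert (He : 0 < eta / 4) by lra.
  destruct (volterra_at_near_small Ss 1 _ HSs Rlt_0_1 He) as [d1 [Hd1 H1]].
  destruct (volterra_at_near_small Is 1 _ HIs Rlt_0_1 He) as [d2 [Hd2 H2]].
  destruct (volterra_at_near_small Cs weight_C _ HCs weight_C_pos He) as [d3 [Hd3 H3]].
  destruct (volterra_at_near_small As weight_A _ HAs weight_A_pos He) as [d4 [Hd4 H4]].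
  destruct (ex_pos_le4 d1 d2 d3 d4 Hd1 Hd2 Hd3 Hd4) as [d [Hd [Hd1' [Hd2' [Hd3' Hd4']]]]].
  exists d. split; [exact Hd|]. intros s i c a Hdist.
  destruct (dist4_ge_components s i c a Ss Is Cs As) as [Hs [Hi [Hc Ha]]].
  destruct (H1 s ltac:(lra)) as [Hs0 Hs1]. destruct (H2 i ltac:(lra)) as [Hi0 Hi1].
  destruct (H3 c ltac:(lra)) as [Hc0 Hc1]. destruct (H4 a ltac:(lra)) as [Ha0 Ha1].
  split; [repeat split; assumption|]. unfold lyapunov. lra.
Qed.

Theorem equilibrium_stable : forall eps, 0 < eps -> exists delta, 0 < delta /\
  forall S I C A : R -> R, solution S I C A ->
    in_Omega Lam mu (S 0) (I 0) (C 0) (A 0) -> ~ in_Omega0 Lam mu (S 0) (I 0) (C 0) (A 0) ->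
    dist4 (S 0) (I 0) (C 0) (A 0) Ss Is Cs As < delta ->
    forall t, 0 <= t -> dist4 (S t) (I t) (C t) (A t) Ss Is Cs As < eps.
Proof.
  intros eps Heps.
  destruct (lyapunov_small_close eps Heps) as [eta [Heta Hclose]].
  destruct (lyapunov_near_small eta Heta) as [d [Hd Hnear]].
  exists d. split; [exact Hd|]. intros S I C A Hsol Hinit Hinf Hdist t Ht.
  destruct (Hnear _ _ _ _ Hdist) as [Hpos0 HV0].
  destruct (Rle_lt_or_eq_dec 0 t Ht) as [Htpos | <-]; [|apply Hclose; assumption].
  pose proof (solution_positive S I C A Hsol Hinit Hinf) as Hpos.
  apply Hclose; [apply Hpos, Htpos|].
  eapply Rle_lt_trans; [apply (lyapunov_le_initial S I C A Hsol Hpos Hpos0 t Htpos) | exact HV0].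
Qed.

Theorem equilibrium_attractive (S I C A : R -> R) : solution S I C A ->
  in_Omega Lam mu (S 0) (I 0) (C 0) (A 0) -> ~ in_Omega0 Lam mu (S 0) (I 0) (C 0) (A 0) ->
  is_lim S p_infty Ss /\ is_lim I p_infty Is /\ is_lim C p_infty Cs /\ is_lim A p_infty As.
Proof.
  intros Hsol Hinit Hinf.
  pose proof (solution_positive S I C A Hsol Hinit Hinf) as Hpos.
  assert (Hbound : forall t, 0 < t -> S t + I t + C t + A t <= M)
    by (intros t Ht; apply (population_le S I C A Hsol); [apply Hinit | lra]).
  pose proof (S_lim S I C A Hsol Hpos Hbound) as HS.
  pose proof (C_I_gap_lim S I C A Hsol Hpos Hbound) as HuC.
  pose proof (A_I_gap_lim S I C A Hsol Hpos Hbound) as HuA.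
  pose proof (population_lim S I C A Hsol) as HN.
  pose proof equilibrium_total as Htot.
  (* [I (Is + Cs + As) / Is = N - S - Cs (C/Cs - I/Is) - As (A/As - I/Is)]. *)
  assert (HI : is_lim I p_infty Is).
  { pose proof (is_lim_scal_l _ (Is / (Is + Cs + As)) p_infty _
      (is_lim_minus' _ _ p_infty _ _
        (is_lim_minus' _ _ p_infty _ _ (is_lim_minus' _ _ p_infty _ _ HN HS)
           (is_lim_scal_l _ Cs p_infty _ HuC))
        (is_lim_scal_l _ As p_infty _ HuA))) as H.
    simpl in H. replace (Is / (Is + Cs + As) * (Lam / mu - Ss - Cs * 0 - As * 0)) with Is in H
      by (rewrite <- Htot; field; lra).
    refine (is_lim_ext _ _ _ _ _ H). intro t. field. lra. }
  repeat split; [exact HS | exact HI | |].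
  - pose proof (is_lim_scal_l _ Cs p_infty _ (is_lim_plus' _ _ p_infty _ _ HuC
                  (is_lim_scal_l _ (/ Is) p_infty _ HI))) as H.
    simpl in H. replace (Cs * (0 + / Is * Is)) with Cs in H by (field; lra).
    refine (is_lim_ext _ _ _ _ _ H). intro t. field. lra.
  - pose proof (is_lim_scal_l _ As p_infty _ (is_lim_plus' _ _ p_infty _ _ HuA
                  (is_lim_scal_l _ (/ Is) p_infty _ HI))) as H.
    simpl in H. replace (As * (0 + / Is * Is)) with As in H by (field; lra).
    refine (is_lim_ext _ _ _ _ _ H). intro t. field. lra.
Qed.

End Equilibrium.

End Model.

(** * The endemic equilibrium *)

Section EndemicEquilibrium.

Variables Lam mu beta rho phi alpha omega etaC etaA : R.
Hypotheses (HLam : 0 < Lam) (Hmu : 0 < mu) (Hbeta : 0 < beta) (Hrho : 0 < rho)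
  (Hphi : 0 < phi) (Halpha : 0 < alpha) (Homega : 0 < omega)
  (HetaC : 0 < etaC) (HetaA : 0 < etaA).

Local Notation Ss := (Sstar Lam mu beta rho phi alpha omega etaC etaA).
Local Notation Is := (Istar Lam mu beta rho phi alpha omega etaC etaA).
Local Notation Cs := (Cstar Lam mu beta rho phi alpha omega etaC etaA).
Local Notation As := (Astar Lam mu beta rho phi alpha omega etaC etaA).
Local Notation R0 := (R0t mu beta rho phi alpha omega etaC etaA).

Lemma Dden_pos : 0 < Dden mu rho phi alpha omega.
Proof. unfold Dden, xi1, xi2. apply Rmult_lt_0_compat; nra. Qed.

Lemma endemic_equilibrium_positive : R0 > 1 -> positive4 Ss Is Cs As.
Proof.
  intro HR0. pose proof Dden_pos.
  assert (Hr : 0 < 1 - 1 / R0).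
  { enough (1 / R0 < 1) by lra. apply (Rmult_lt_reg_r R0); [lra|].
    replace (1 / R0 * R0) with 1 by (field; lra). lra. }
  unfold Sstar, Istar, Cstar, Astar, xi1, xi2.
  repeat split; apply Rdiv_lt_0_compat; repeat first [assumption | lra | apply Rmult_lt_0_compat].
Qed.

Lemma endemic_equilibrium_steady :
  fS Lam mu beta etaC etaA Ss Is Cs As = 0 /\
  fI Lam mu beta rho phi alpha omega etaC etaA Ss Is Cs As = 0 /\
  fC mu phi omega Is Cs = 0 /\ fA mu rho alpha Is As = 0.
Proof.
  assert (HD : 0 < (omega + mu) * (rho + (alpha + mu)) + phi * (alpha + mu)) by nra.
  assert (HN : 0 < (omega + mu) * (alpha + mu + rho * etaA) + etaC * phi * (alpha + mu)).
  { assert (0 < etaC * phi * (alpha + mu)) by (repeat apply Rmult_lt_0_compat; lra).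
    assert (0 < (omega + mu) * (alpha + mu + rho * etaA)) by (apply Rmult_lt_0_compat; nra). lra. }
  unfold Sstar, Istar, Cstar, Astar, R0t, Dden, fS, fI, fC, fA, beta1, xi1, xi2, xi3.
  repeat split; field; repeat split; lra.
Qed.

End EndemicEquilibrium.

Theorem mainTheorem1 (Lam mu beta rho phi alpha omega etaC etaA : R)
  (HLam : 0 < Lam) (Hmu : 0 < mu) (Hbeta : 0 < beta) (Hrho : 0 < rho)
  (Hphi : 0 < phi) (Halpha : 0 < alpha) (Homega : 0 < omega)
  (HetaC0 : 0 < etaC) (HetaC1 : etaC <= 1) (HetaA : 1 <= etaA)
  (HR0 : R0t mu beta rho phi alpha omega etaC etaA > 1) :
  let Ss := Sstar Lam mu beta rho phi alpha omega etaC etaA in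
  let Is := Istar Lam mu beta rho phi alpha omega etaC etaA in
  let Cs := Cstar Lam mu beta rho phi alpha omega etaC etaA in
  let As := Astar Lam mu beta rho phi alpha omega etaC etaA in
  (* Lyapunov stability relative to Omega \ Omega_0 *)
  (forall eps, 0 < eps -> exists delta, 0 < delta /\
     forall S I C A : R -> R,
       is_solution Lam mu beta rho phi alpha omega etaC etaA S I C A ->
       in_Omega Lam mu (S 0) (I 0) (C 0) (A 0) ->
       ~ in_Omega0 Lam mu (S 0) (I 0) (C 0) (A 0) ->
       dist4 (S 0) (I 0) (C 0) (A 0) Ss Is Cs As < delta ->
       forall t, 0 <= t -> dist4 (S t) (I t) (C t) (A t) Ss Is Cs As < eps) /\
  (* global attractivity on Omega \ Omega_0 *)
  (forall S I C A : R -> R,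
     is_solution Lam mu beta rho phi alpha omega etaC etaA S I C A ->
     in_Omega Lam mu (S 0) (I 0) (C 0) (A 0) ->
     ~ in_Omega0 Lam mu (S 0) (I 0) (C 0) (A 0) ->
     is_lim S p_infty Ss /\ is_lim I p_infty Is /\
     is_lim C p_infty Cs /\ is_lim A p_infty As).
Proof.
  intros Ss Is Cs As.
  assert (HetaA0 : 0 < etaA) by lra.
  destruct (endemic_equilibrium_positive Lam mu beta rho phi alpha omega etaC etaA)
    as [HSs [HIs [HCs HAs]]]; try assumption.
  destruct (endemic_equilibrium_steady Lam mu beta rho phi alpha omega etaC etaA)
    as [HeqS [HeqI [HeqC HeqA]]]; try assumption.
  split.
  - eapply equilibrium_stable; eassumption.
  - intros S I C A. eapply equilibrium_attractive; eassumption.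
Qed.
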